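(* Let $\{\mathcal{S}(t)\}_{t\ge0}$ be an NGSP and let $p(n,t)=P(\mathcal{S}(t)=n)$ for $n\in\mathbb{Z}$, $t\ge0$. Then for every $t\ge0$ and every integer $n\ge1$, $$p(n,t)=\frac{1}{n}\sum_{j=1}^{k}j\left(\Lambda_{j}(t)\,p(n-j,t)-T_{j}(t)\,p(n+j,t)\right).$$
   Context: Fix $k\in\mathbb{N}$. Given locally integrable functions $\lambda_j:[0,\infty)\to[0,\infty)$, $j=1,\dots,k$, with $\Lambda_j(t)=\int_0^t\lambda_j(u)\,du<\infty$ and $\Lambda_j(s,t)=\Lambda_j(t)-\Lambda_j(s)$, a non-homogeneous generalized counting process (NGCP) with intensities $\lambda_1,\dots,\lambda_k$ is a process $\{\mathcal{M}(t)\}_{t\ge0}$ with $\mathcal{M}(0)=0$, independent increments, and $\mathbb{E}[u^{\mathcal{M}(t)-\mathcal{M}(s)}]=\exp\left(\sum_{j=1}^k\Lambda_j(s,t)(u^j-1)\right)$ for $0\le s<t$. The non-homogeneous generalized Skellam process (NGSP) is $\mathcal{S}(t)=\mathcal{M}_1(t)-\mathcal{M}_2(t)$, where $\mathcal{M}_1,\mathcal{M}_2$ are independent NGCPs with intensities $\lambda_j$ and $\gamma_j$ ($j=1,\dots,k$) respectively, with cumulative functions $\Lambda_j(t)=\int_0^t\lambda_j$ and $T_j(t)=\int_0^t\gamma_j$. *)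

From HB Require Import structures.
From mathcomp Require Import all_boot all_order all_algebra.
From mathcomp Require Import all_classical all_reals all_analysis.
Set Implicit Arguments. Unset Strict Implicit. Unset Printing Implicit Defensive.
Import Order.TTheory GRing.Theory Num.Theory.
Import numFieldNormedType.Exports.
Local Open Scope classical_set_scope.
Local Open Scope ring_scope.

Section NGSP.
Context {d : measure_display} {T : measurableType d} {R : realType}.

Definition Lam (lam : nat -> R -> R) (j : nat) (t : R) : R :=
  Rintegral lebesgue_measure `[0, t] (lam j).

Definition Lam2 (lam : nat -> R -> R) (j : nat) (s t : R) : R :=
  Lam lam j t - Lam lam j s.

Definition intensities (k : nat) (lam : nat -> R -> R) : Prop :=
  forall j, (1 <= j <= k)%N ->
    (forall x, 0 <= x -> 0 <= lam j x) /\
    (forall t, 0 <= t -> lebesgue_measure.-integrable `[0, t] (EFin \o lam j)).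

Definition discrete_process (M : R -> T -> nat) : Prop :=
  forall t (n : nat), measurable [set w | M t w = n].

Definition indep_increments (P : probability T R) (M : R -> T -> nat) : Prop :=
  forall (ts : seq R) (a : seq int),
    sorted <%R ts -> all (fun t => 0 <= t) ts -> size a = (size ts).-1 ->
    P (\bigcap_(i < (size ts).-1)
          [set w | ((M ts`_i.+1 w)%:Z - (M ts`_i w)%:Z)%R = a`_i])
    = (\prod_(i < (size ts).-1)
          P [set w | ((M ts`_i.+1 w)%:Z - (M ts`_i w)%:Z)%R = a`_i])%E.

Definition is_NGCP (P : probability T R) (k : nat) (lam : nat -> R -> R)
    (M : R -> T -> nat) : Prop :=
  [/\ intensities k lam,
      discrete_process M,
      (forall w, M 0 w = 0%N),
      indep_increments P M &
      (forall s t u : R, 0 <= s -> s < t -> -1 <= u <= 1 ->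
        (\int[P]_w ((u ^ ((M t w)%:Z - (M s w)%:Z))%:E))%E
        = (expR (\sum_(1 <= j < k.+1) Lam2 lam j s t * (u ^+ j - 1)))%:E)].

Definition indep_processes (P : probability T R) (M1 M2 : R -> T -> nat) : Prop :=
  forall (ts us : seq R) (a b : seq nat),
    all (fun t => 0 <= t) ts -> all (fun t => 0 <= t) us ->
    size a = size ts -> size b = size us ->
    P ((\bigcap_(i < size ts) [set w | M1 ts`_i w = a`_i]) `&`
       (\bigcap_(i < size us) [set w | M2 us`_i w = b`_i]))
    = (P (\bigcap_(i < size ts) [set w | M1 ts`_i w = a`_i]) *
       P (\bigcap_(i < size us) [set w | M2 us`_i w = b`_i]))%E.

Definition pS (P : probability T R) (M1 M2 : R -> T -> nat) (n : int) (t : R) : R :=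
  fine (P [set w | (M1 t w)%:Z - (M2 t w)%:Z = n]).

End NGSP.

(* For an NGCP [M], the generating function of [q n = P(M(t) = n)] is
   [G x = exp (sum_j Lambda_j(t) (x^j - 1))], so [x G' = G * sum_j j Lambda_j(t) x^j];
   comparing coefficients gives the recursion [n q n = sum_j j Lambda_j(t) q (n - j)].
   By independence [p(n,t) = sum_m q1 (n + m) q2 m]; splitting [n = (n + m) - m] and
   applying the recursion to [q1] at [n + m] and to [q2] at [m] yields the identity. *)

From mathcomp Require Import all_boot all_order all_algebra.
From mathcomp Require Import all_classical all_reals all_analysis.
From mathcomp Require Import ring lra measurable_realfun.
Import Order.TTheory GRing.Theory Num.Theory.
Import numFieldNormedType.Exports.
Local Open Scope classical_set_scope.
Local Open Scope ring_scope.

Set Implicit Arguments. Unset Strict Implicit. Unset Printing Implicit Defensive.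

Section Series.
Variable R : realType.
Implicit Types (a c : nat -> R) (x C : R).

(* Power series are controlled through the crude bound [|a n| <= C 4^n]: it covers
   probabilities and their first two formal derivatives, and makes every series
   converge on [0, 1/8], where it is dominated by a geometric series of ratio 1/2. *)
Lemma natr_le_exp4 n : (n%:R : R) <= 4%:R ^+ n.
Proof.
rewrite -natrX ler_nat (leq_trans (ltnW (ltn_expl n (isT : 1 < 2)%N))) //.
by rewrite (_ : 4 = 2 * 2)%N // expnMn leq_pmulr // expn_gt0.
Qed.

Lemma natr_mulSS_le_exp4 n : ((n.+1 * n.+2)%:R : R) <= 2 * 4%:R ^+ n.
Proof.
rewrite -natrX -(natrM _ 2) ler_nat.
apply: (leq_trans (leq_mul (ltn_expl n (isT : 1 < 2)%N) (ltn_expl n.+1 (isT : 1 < 2)%N))).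
by rewrite expnS mulnCA -expnMn.
Qed.

Lemma exp4_bound_ge0 a C : (forall n, `|a n| <= C * 4%:R ^+ n) -> 0 <= C.
Proof. by move=> /(_ 0%N); rewrite expr0 mulr1; apply: le_trans. Qed.

Lemma pseries_term_le_geometric a C x :
  (forall n, `|a n| <= C * 4%:R ^+ n) -> 0 <= x <= 8^-1 ->
  forall n, `|a n * x ^+ n| <= geometric C 2^-1 n.
Proof.
move=> aC /andP[x0 x8] n; have C0 := exp4_bound_ge0 aC.
rewrite normrM (ger0_norm (exprn_ge0 _ x0)) /geometric /=.
apply: (le_trans (ler_wpM2r (exprn_ge0 _ x0) (aC n))).
rewrite -mulrA ler_wpM2l // -exprMn lerXn2r ?nnegrE ?mulr_ge0 //.
by rewrite (le_trans (ler_wpM2l _ x8)) //; lra.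
Qed.

Lemma is_cvg_normed_pseries_exp4 a C x :
  (forall n, `|a n| <= C * 4%:R ^+ n) -> 0 <= x <= 8^-1 ->
  cvgn [normed pseries a x].
Proof.
move=> aC x08; have C0 := exp4_bound_ge0 aC.
apply: (@series_le_cvg _ _ (geometric C 2^-1)) => [n|n|n|].
- exact: normr_ge0.
- by rewrite mulr_ge0 // exprn_ge0.
- exact: pseries_term_le_geometric.
- by apply: is_cvg_geometric_series; rewrite ger0_norm; lra.
Qed.

Lemma is_cvg_pseries_exp4 a C x :
  (forall n, `|a n| <= C * 4%:R ^+ n) -> 0 <= x <= 8^-1 -> cvgn (pseries a x).
Proof. by move=> aC x08; apply/normed_cvg/(is_cvg_normed_pseries_exp4 aC). Qed.

Lemma lim_pseries_exp4_le a C x :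
  (forall n, `|a n| <= C * 4%:R ^+ n) -> 0 <= x <= 8^-1 ->
  `|limn (pseries a x)| <= 2 * C.
Proof.
move=> aC x08; have cn := is_cvg_normed_pseries_exp4 aC x08.
have hz : `|2^-1 : R| < 1 by rewrite ger0_norm; lra.
apply: (le_trans (lim_series_norm cn)).
apply: (le_trans (lim_series_le cn (is_cvg_geometric_series hz)
  (pseries_term_le_geometric aC x08))).
rewrite (cvg_lim _ (cvg_geometric_series hz)) //.
by rewrite (_ : 1 - 2^-1 = 2^-1 :> R) ?invrK ?[_ * 2]mulrC //; field.
Qed.

Lemma lim_pseries_shift a x m : cvgn (pseries (fun n => a (n + m)%N) x) ->
  limn (pseries a x) = \sum_(i < m) a i * x ^+ i +
     x ^+ m * limn (pseries (fun n => a (n + m)%N) x).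
Proof.
move=> cs; apply: cvg_lim => //; rewrite -(cvg_shiftn m).
suff -> : [sequence pseries a x (n + m)%N]_n = (fun N => \sum_(i < m) a i * x ^+ i +
     x ^+ m * pseries (fun n => a (n + m)%N) x N).
  exact: cvgD (cvg_cst _) (cvgM (cvg_cst _) cs).
apply/funext => N; rewrite /pseries /series /= addnC.
rewrite (@big_cat_nat _ _ _ m) ?leq0n ?leq_addr //= big_mkord; congr (_ + _).
rewrite -{1}(add0n m) big_addn addKn mulr_sumr; apply: eq_bigr => i _.
by rewrite exprD; ring.
Qed.

(* If the coefficients below [n] vanish, the sum is [x^n (a n + O(x))]. *)
Lemma lowest_coef_le a C x n :
  (forall n, `|a n| <= C * 4%:R ^+ n) -> (forall i, (i < n)%N -> a i = 0) ->
  0 < x <= 8^-1 ->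
  `|a n| <= `|limn (pseries a x)| / x ^+ n + x * (2 * (C * 4%:R ^+ n.+1)).
Proof.
move=> aC a0 /andP[x0 x8]; have x08 : 0 <= x <= 8^-1 by rewrite ltW.
pose b i := a (i + n)%N; pose e i := b (i + 1)%N.
have bC i : `|b i| <= (C * 4%:R ^+ n) * 4%:R ^+ i.
  by rewrite -mulrA -exprD addnC; exact: aC.
have eC i : `|e i| <= (C * 4%:R ^+ n.+1) * 4%:R ^+ i.
  by rewrite -mulrA -exprD /e /b addn1 addSnnS addnC; exact: aC.
have -> : limn (pseries a x) = x ^+ n * (b 0%N + x * limn (pseries e x)).
  rewrite (lim_pseries_shift (is_cvg_pseries_exp4 bC x08)).
  rewrite big1 ?add0r => [|i _]; last by rewrite a0 ?mul0r.
  rewrite (lim_pseries_shift (is_cvg_pseries_exp4 eC x08)).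
  by rewrite big_ord1 expr0 mulr1 expr1.
have xn0 : 0 < x ^+ n by rewrite exprn_gt0.
rewrite normrM (ger0_norm (ltW xn0)) mulrC mulKf ?gt_eqF // -[a n]/(b 0%N).
rewrite -[X in `|X|](addrK (x * limn (pseries e x))) (le_trans (ler_normB _ _)) //.
rewrite lerD2l normrM (ger0_norm (ltW x0)) ler_wpM2l ?(ltW x0) //.
exact: lim_pseries_exp4_le.
Qed.

Lemma pseries_coef_eq0 c C :
  (forall n, `|c n| <= C * 4%:R ^+ n) ->
  (forall x, 0 < x < 8^-1 -> limn (pseries c x) = 0) -> forall n, c n = 0.
Proof.
move=> cC c0 n; elim/ltn_ind: n => n IH.
set B := 2 * (C * 4%:R ^+ n.+1).
have cn_le x : 0 < x < 8^-1 -> `|c n| <= x * B.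
  move=> /[dup] /c0 cx /andP[x0 x8].
  by have := lowest_coef_le cC IH (x := x); rewrite cx normr0 mul0r add0r x0 ltW //; apply.
apply/normr0_eq0/le_anti; rewrite normr_ge0 andbT.
apply/ler_addgt0Pr => eps eps0; rewrite add0r.
have B0 : 0 <= B by rewrite !mulr_ge0 ?exprn_ge0 ?(exp4_bound_ge0 cC).
pose x := Num.min 16^-1 (eps / (B + 1)).
have x0 : 0 < x by rewrite lt_min divr_gt0 ?andbT //; lra.
have x8 : x < 8^-1 by rewrite gt_min; apply/orP; left; lra.
apply: (le_trans (cn_le x _)); first by rewrite x0.
have : x <= eps / (B + 1) by rewrite ge_min lexx orbT.
rewrite ler_pdivlMr ?ltr_wpDl // => /(le_trans _); apply.
by rewrite ler_pM2l // lerDl.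
Qed.

Lemma lim_pseries_lincomb (I : Type) (r : seq I) (w : I -> R) (F : I -> nat -> R) x :
  (forall j, cvgn (pseries (F j) x)) ->
  cvgn (pseries (fun n => \sum_(j <- r) w j * F j n) x) /\
  limn (pseries (fun n => \sum_(j <- r) w j * F j n) x) =
    \sum_(j <- r) w j * limn (pseries (F j) x).
Proof.
move=> cF; elim: r => [|j r [IHc IHl]].
  rewrite (_ : pseries _ x = cst 0); last first.
    by apply/funext => N; rewrite /pseries /series /= big1 // => i _; rewrite big_nil mul0r.
  by rewrite big_nil; split; [exact: is_cvg_cst | exact: lim_cst].
have -> : pseries (fun n => \sum_(i <- j :: r) w i * F i n) x =
    series (w j *: (fun n => F j n * x ^+ n) +
            (fun n => (\sum_(i <- r) w i * F i n) * x ^+ n)).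
  by apply/funext => N; apply: eq_bigr => i _; rewrite /= big_cons mulrDl !fctE -mulrA.
have cj : cvgn (series (w j *: (fun n => F j n * x ^+ n))).
  by apply: is_cvg_seriesZ; exact: cF.
split; first exact: is_cvg_seriesD cj IHc.
rewrite lim_seriesD // lim_seriesZ //; last exact: cF.
by rewrite [RHS]big_cons -IHl.
Qed.

Lemma is_derive_scaled_pow (L x : R) n :
  is_derive x 1 (fun y : R => L * (y ^+ n - 1)) (L * (n%:R * x ^+ n.-1)).
Proof.
have dX := DeriveDef (@exprn_derivable R n x 1) (exp_derive n x 1).
rewrite (_ : (fun y => _) = L \*: ((@GRing.exp R)^~ n - cst 1)); last first.
  by apply/funext => y; rewrite !fctE.
move: (is_deriveZ L (is_deriveB dX (is_derive_cst (1 : R) x 1))) => /is_derive_eq; apply.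
by rewrite subr0 /GRing.scale /= mulr1.
Qed.

Lemma is_derive_sum_pow (I : Type) (r : seq I) (e : I -> nat) (L : I -> R) x :
  is_derive x 1 (fun y : R => \sum_(j <- r) L j * (y ^+ e j - 1))
    (\sum_(j <- r) L j * ((e j)%:R * x ^+ (e j).-1)).
Proof.
elim: r => [|j r IH].
  rewrite big_nil (_ : (fun _ => _) = cst 0); first exact: is_derive_cst.
  by apply/funext => y; rewrite big_nil.
rewrite big_cons (_ : (fun y : R => _) = (fun y => L j * (y ^+ e j - 1)) +
   (fun y => \sum_(i <- r) L i * (y ^+ e i - 1))); last first.
  by apply/funext => y; rewrite big_cons.
exact: is_deriveD (is_derive_scaled_pow _ _ _) IH.
Qed.

Lemma lim_pseries_natrM a x : cvgn (pseries (pseries_diffs a) x) ->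
  limn (pseries (fun n => n%:R * a n) x) = x * limn (pseries (pseries_diffs a) x).
Proof.
have -> : pseries_diffs a = fun n => (n + 1)%:R * a (n + 1)%N.
  by apply/funext => n; rewrite addn1.
move=> cd; rewrite (lim_pseries_shift cd) big_ord1 /=.
by rewrite mul0r mul0r add0r expr1.
Qed.

Lemma lim_pseries_delay (a : int -> R) j x :
  (forall y, y < 0 -> a y = 0) -> cvgn (pseries (fun n => a n%:Z) x) ->
  limn (pseries (fun n => a (n%:Z - j%:Z)) x) = x ^+ j * limn (pseries (fun n => a n%:Z) x).
Proof.
move=> a0 cs; have eq_a : (fun n => a ((n + j)%N%:Z - j%:Z)) = fun n => a n%:Z.
  by apply/funext => n; rewrite PoszD addrK.
have cs' : cvgn (pseries (fun n => a ((n + j)%N%:Z - j%:Z)) x) by rewrite eq_a.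
rewrite (lim_pseries_shift cs') eq_a big1 ?add0r // => i _.
by rewrite a0 ?mul0r // subr_lt0 ltz_nat.
Qed.

Lemma pseries_diffs_le1_exp4 a :
  (forall n, `|a n| <= 1) -> forall n, `|pseries_diffs a n| <= 4%:R * 4%:R ^+ n.
Proof.
move=> a1 n; rewrite /pseries_diffs normrM -exprS -[leRHS]mulr1 ler_pM //.
by rewrite ger0_norm // natr_le_exp4.
Qed.

(* Both sides are derivatives at [x] of the same function: termwise for the series,
   by the chain rule for [expR \o f]. *)
Lemma lim_pseries_diffs_expR a (f : R -> R) df x :
  (forall n, `|a n| <= 1) ->
  (forall y, 0 < y < 8^-1 -> limn (pseries a y) = expR (f y)) ->
  is_derive x 1 f df -> 0 < x < 8^-1 ->
  limn (pseries (pseries_diffs a) x) = expR (f x) * df.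
Proof.
move=> a1 aE df_x /[dup] x08 /andP[x0 x8].
have K08 : 0 <= (8^-1 : R) <= 8^-1 by rewrite lexx andbT invr_ge0.
have aC n : `|a n| <= 1 * 4%:R ^+ n.
  by rewrite mul1r (le_trans (a1 n)) // exprn_ege1 // ler1n.
have d1C := pseries_diffs_le1_exp4 a1.
have d2C n : `|pseries_diffs (pseries_diffs a) n| <= 2 * 4%:R ^+ n.
  rewrite /pseries_diffs !normrM !normr_nat mulrA -natrM -[leRHS]mulr1.
  by rewrite ler_pM // natr_mulSS_le_exp4.
have dG : is_derive x 1 (fun y => limn (pseries a y)) (limn (pseries (pseries_diffs a) x)).
  apply: (pseries_snd_diffs (is_cvg_pseries_exp4 aC K08) (is_cvg_pseries_exp4 d1C K08)
    (is_cvg_pseries_exp4 d2C K08)).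
  by rewrite !ger0_norm ?(ltW x0) // invr_ge0.
have near_aE : \forall y \near x, (expR \o f) y = limn (pseries a y).
  have : x \in `]0, 8^-1[ by rewrite in_itv /= x0 x8.
  move/near_in_itvoo; apply: filterS => y; rewrite in_itv /= => y08.
  by rewrite /= aE.
have dE := near_eq_is_derive near_aE (is_derive1_comp (is_derive_expR (f x)) df_x).
by rewrite -(@derive_val _ _ _ _ _ _ _ dG) (@derive_val _ _ _ _ _ _ _ dE).
Qed.

Lemma EFin_lim_pseries a x : cvgn (pseries a x) ->
  (\sum_(n <oo) (a n * x ^+ n)%:E)%E = (limn (pseries a x))%:E.
Proof.
move=> ca; rewrite -EFin_lim //; congr (lim (_ @ \oo)).
by apply/funext => N; rewrite /= sumEFin.
Qed.

Lemma pgf_expR_recursion (p : int -> R) (L : nat -> R) k :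
  (forall y, y < 0 -> p y = 0) -> (forall y, `|p y| <= 1) ->
  (forall x, 0 < x < 8^-1 -> limn (pseries (fun n => p n%:Z) x) =
     expR (\sum_(1 <= j < k.+1) L j * (x ^+ j - 1))) ->
  forall m : nat, m%:R * p m = \sum_(1 <= j < k.+1) j%:R * L j * p (m%:Z - j%:Z).
Proof.
move=> p0 p1 pE m; apply/eqP; rewrite -subr_eq0; apply/eqP.
pose c n := n%:R * p n%:Z - \sum_(1 <= j < k.+1) j%:R * L j * p (n%:Z - j%:Z).
have le1_exp4 n : (1 : R) <= 4%:R ^+ n by rewrite exprn_ege1 // ler1n.
have delayC j n : `|p (n%:Z - j%:Z)| <= 1 * 4%:R ^+ n by rewrite mul1r (le_trans (p1 _)).
have nC n : `|n%:R * p n%:Z| <= 1 * 4%:R ^+ n.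
  by rewrite mul1r normrM normr_nat -[leRHS]mulr1 ler_pM // natr_le_exp4.
pose A := \sum_(1 <= j < k.+1) `|j%:R * L j|.
have cC n : `|c n| <= (1 + A) * 4%:R ^+ n.
  rewrite (le_trans (ler_normB _ _)) // mulrDl lerD // /A mulr_suml.
  rewrite (le_trans (ler_norm_sum _ _ _)) // ler_sum // => j _.
  by rewrite normrM ler_pM // -[leRHS]mul1r delayC.
apply: (pseries_coef_eq0 cC) => x /[dup] x08' /andP[x0 x8].
have x08 : 0 <= x <= 8^-1 by rewrite !ltW.
have cvg_delay j := is_cvg_pseries_exp4 (delayC j) x08.
have [cS lS] := lim_pseries_lincomb (index_iota 1 k.+1) (fun j => j%:R * L j) cvg_delay.
have cN := is_cvg_pseries_exp4 nC x08.
have cP : cvgn (pseries (fun n => p n%:Z) x).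
  by apply: (is_cvg_pseries_exp4 (C := 1)) x08 => n; rewrite mul1r (le_trans (p1 _)).
have cD := is_cvg_pseries_exp4 (pseries_diffs_le1_exp4 (fun n => p1 n%:Z)) x08.
have dQ := is_derive_sum_pow (index_iota 1 k.+1) id L x.
have := lim_pseries_diffs_expR (fun n => p1 n%:Z) pE dQ x08'.
rewrite -(pE x x08') => dE.
have -> : pseries c x = series ((fun n => n%:R * p n%:Z * x ^+ n) -
    (fun n => (\sum_(1 <= j < k.+1) j%:R * L j * p (n%:Z - j%:Z)) * x ^+ n)).
  apply/funext => N; rewrite /pseries /series /=; apply: eq_bigr => i _.
  by rewrite /c mulrBl.
rewrite lim_seriesB // -/(pseries (fun n => n%:R * p n%:Z) x).
move: (lim_pseries_natrM cD) => /= ->; rewrite dE lS.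
rewrite !mulr_sumr -sumrB.
rewrite big_nat_cond big1 // => j /andP[/andP[j1 _] _].
rewrite (lim_pseries_delay _ p0 cP) -(prednK j1) exprS /=.
by apply/eqP; rewrite subr_eq0; apply/eqP; ring.
Qed.

Lemma nneseries_lincomb (w : nat -> R) (f : nat -> nat -> R) k :
  (forall j, (1 <= j <= k)%N -> 0 <= w j) -> (forall j m, 0 <= f j m) ->
  (\sum_(1 <= j < k.+1) (w j)%:E * \sum_(m <oo) (f j m)%:E =
   \sum_(m <oo) (\sum_(1 <= j < k.+1) w j * f j m)%:E)%E.
Proof.
move=> w0 f0; rewrite big_nat_cond.
rewrite (eq_bigr (fun j => \sum_(m <oo) (w j * f j m)%:E)%E) => [|j /andP[/andP[j1 jk] _]].
  rewrite -nneseries_sum => [|j m /andP[/andP[j1 jk] _]].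
    by apply: eq_eseriesr => m _; rewrite sumEFin -big_nat_cond.
  by rewrite lee_fin mulr_ge0 // w0 // j1 -ltnS.
rewrite -nneseriesZl => [|m _]; last by rewrite lee_fin.
by apply: eq_eseriesr => m _; rewrite EFinM.
Qed.

End Series.

Section DiffConvolution.
Variables (R : realType) (q p : int -> R).

Definition diff_convolution (z : int) : \bar R := (\sum_(m <oo) (q (z + m%:Z) * p m%:Z)%:E)%E.

Variable k : nat.
Hypotheses (q_ge0 : forall y, 0 <= q y) (p_ge0 : forall y, 0 <= p y).
Hypothesis p_lt0 : forall y, y < 0 -> p y = 0.
Local Notation D := diff_convolution.

Lemma diff_convolution_shift z (j : nat) :
  (\sum_(m <oo) (q (z + m%:Z) * p (m%:Z - j%:Z))%:E)%E = D (z + j%:Z).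
Proof.
have term_ge0 (m : nat) : (0 <= (q (z + m%:Z) * p (m%:Z - j%:Z))%:E)%E.
  by rewrite lee_fin mulr_ge0.
rewrite (nneseries_split 0 j) // add0n big1_seq ?add0e; last first.
  move=> m /andP[_]; rewrite mem_index_iota => /andP[_ mj].
  by rewrite p_lt0 ?mulr0 // subr_lt0 ltz_nat.
rewrite -nneseries_addn //; apply: eq_eseriesr => m _.
by rewrite PoszD addrK addrA (addrAC z).
Qed.

Lemma diff_convolution_recursion (L G : nat -> R) (n : nat) :
  (forall j, (1 <= j <= k)%N -> 0 <= L j) -> (forall j, (1 <= j <= k)%N -> 0 <= G j) ->
  (forall a : nat, a%:R * q a = \sum_(1 <= j < k.+1) j%:R * L j * q (a%:Z - j%:Z)) ->
  (forall a : nat, a%:R * p a = \sum_(1 <= j < k.+1) j%:R * G j * p (a%:Z - j%:Z)) ->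
  (\sum_(1 <= j < k.+1) (j%:R * L j)%:E * D (n%:Z - j%:Z) =
   n%:R%:E * D n + \sum_(1 <= j < k.+1) (j%:R * G j)%:E * D (n%:Z + j%:Z))%E.
Proof.
move=> L0 G0 qrec prec.
have jL0 j : (1 <= j <= k)%N -> 0 <= j%:R * L j by move=> /L0; apply: mulr_ge0.
have jG0 j : (1 <= j <= k)%N -> 0 <= j%:R * G j by move=> /G0; apply: mulr_ge0.
transitivity (\sum_(m <oo) ((n + m)%N%:R * q (n%:Z + m%:Z) * p m%:Z)%:E)%E.
  rewrite /diff_convolution (nneseries_lincomb jL0) => [|j m]; last by rewrite mulr_ge0.
  apply: eq_eseriesr => m _; rewrite -PoszD qrec mulr_suml; congr EFin.
  by apply: eq_bigr => j _; rewrite PoszD (addrAC n%:Z) mulrA.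
under eq_bigr do rewrite -diff_convolution_shift.
rewrite (nneseries_lincomb jG0) => [|j m]; last by rewrite mulr_ge0.
rewrite /diff_convolution -nneseriesZl => [|m _]; last by rewrite lee_fin mulr_ge0.
rewrite -nneseriesD => [|m _ _|m _ _]; last 2 first.
- by rewrite lee_fin !mulr_ge0.
  rewrite lee_fin big_nat_cond sumr_ge0 // => j /andP[/andP[j1 jk] _].
  by apply: mulr_ge0; [apply: jG0; rewrite j1 -ltnS | apply: mulr_ge0].
apply: eq_eseriesr => m _; rewrite -EFinM -EFinD natrD; congr EFin.
rewrite (eq_bigr (fun j => q (n%:Z + m%:Z) * (j%:R * G j * p (m%:Z - j%:Z)))) => [|j _].
  by rewrite -mulr_sumr -prec; ring.
by rewrite mulrCA.
Qed.

End DiffConvolution.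

Section CountingLaw.
Context (d : measure_display) (T : measurableType d) (R : realType).
Variable P : probability T R.
Implicit Types (M : R -> T -> nat) (t : R) (y : int).

(* The law of [M t], indexed by all integers so that it vanishes below 0. *)
Definition count_pmf (M : R -> T -> nat) t (y : int) : R :=
  fine (P [set w | (M t w)%:Z = y]).

Lemma count_eq_nat M t (a : nat) :
  [set w | (M t w)%:Z = a%:Z] = [set w | M t w = a].
Proof. by apply/seteqP; split => w /= => [[->]|->]. Qed.

Lemma count_eq_lt0 M t y : y < 0 -> [set w | (M t w)%:Z = y] = set0.
Proof. by move=> y0; apply/seteqP; split => w //= Mw; move: y0; rewrite -Mw. Qed.

Lemma count_pmf_nat M t (a : nat) : count_pmf M t a = fine (P [set w | M t w = a]).
Proof. by rewrite /count_pmf count_eq_nat. Qed.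

Lemma count_pmf_lt0 M t y : y < 0 -> count_pmf M t y = 0.
Proof. by move=> y0; rewrite /count_pmf count_eq_lt0 ?measure0. Qed.

Lemma measurable_count_eq M t y : discrete_process M ->
  measurable [set w | (M t w)%:Z = y].
Proof.
move=> dM; case: (ltP y 0) => [y0|/gez0_abs <-]; first by rewrite count_eq_lt0.
by rewrite count_eq_nat.
Qed.

Lemma count_pmf_ge0 M t y : 0 <= count_pmf M t y.
Proof. exact/fine_ge0/measure_ge0. Qed.

Lemma count_pmf_le1 M t y : discrete_process M -> `|count_pmf M t y| <= 1.
Proof.
move=> dM; have mA := measurable_count_eq t y dM.
rewrite ger0_norm ?count_pmf_ge0 // -lee_fin fineK ?fin_num_measure //.
exact: probability_le1.
Qed.

Lemma Lam0 (lam : nat -> R -> R) j : Lam lam j 0 = 0.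
Proof. by rewrite /Lam set_itv1 Rintegral_set1. Qed.

Lemma Lam_ge0 k (lam : nat -> R -> R) j t : intensities k lam -> (1 <= j <= k)%N ->
  0 <= t -> 0 <= Lam lam j t.
Proof.
move=> /(_ j) lam_ge0 /lam_ge0[{}lam_ge0 _] t0.
rewrite /Lam /Rintegral fine_ge0 // integral_ge0 // => y.
by rewrite /= in_itv /= => /andP[y0 _]; rewrite lee_fin lam_ge0.
Qed.

Lemma expectation_pow_count (X : T -> nat) x :
  (forall n, measurable [set w | X w = n]) -> 0 <= x ->
  (\int[P]_w (x ^+ X w)%:E = \sum_(n <oo) (fine (P [set w | X w = n]) * x ^+ n)%:E)%E.
Proof.
move=> mX x0; pose A n := [set w | X w = n].
have term_ge0 n w : (0 <= (x ^+ n * \1_(A n) w)%:E)%E.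
  by rewrite lee_fin mulr_ge0 ?exprn_ge0.
transitivity (\int[P]_w (\sum_(n <oo) (x ^+ n * \1_(A n) w)%:E))%E.
  apply: eq_integral => w _; rewrite (@nneseriesD1 R _ (X w) xpredT) // eseries0 ?adde0.
    by rewrite indicE mem_set // mulr1.
  move=> n _ /negbTE nw; rewrite indicE memNset ?mulr0 //.
  by rewrite /A /= => Xw; rewrite Xw eqxx in nw.
rewrite integral_nneseries // => [|n]; last first.
  by apply/measurable_EFinP/measurable_funM => //; exact/measurable_indic/mX.
apply: eq_eseriesr => n _; have mA : measurable (A n) := mX n.
rewrite (@integralZl_indic _ _ _ P setT measurableT (fun _ => A n)) //.
  by rewrite integral_indic // setIT [RHS]EFinM fineK ?fin_num_measure // muleC.
by move=> /lt_geF; rewrite exprn_ge0.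
Qed.

Lemma ngcp_pgf k lam M t x : is_NGCP P k lam M -> 0 < t -> 0 <= x <= 1 ->
  (\sum_(n <oo) (count_pmf M t n * x ^+ n)%:E =
     (expR (\sum_(1 <= j < k.+1) Lam lam j t * (x ^+ j - 1)))%:E)%E.
Proof.
case=> _ dM M0 _ pgf t0 /andP[x0 x1].
have x11 : -1 <= x <= 1 by rewrite x1 andbT (le_trans _ x0) // lerN10.
transitivity (\int[P]_w (x ^+ M t w)%:E)%E.
  rewrite expectation_pow_count //.
  by apply: eq_eseriesr => n _; rewrite count_pmf_nat.
rewrite (eq_integral (fun w => (x ^ ((M t w)%:Z - (M 0 w)%:Z))%:E)); last first.
  by move=> w _; rewrite M0 subr0.
rewrite pgf //; congr (expR _)%:E; apply: eq_bigr => j _.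
by rewrite /Lam2 Lam0 subr0.
Qed.

Lemma ngcp_count_pmf_recursion k lam M t : is_NGCP P k lam M -> 0 <= t ->
  forall m : nat, m%:R * count_pmf M t m =
    \sum_(1 <= j < k.+1) j%:R * Lam lam j t * count_pmf M t (m%:Z - j%:Z).
Proof.
move=> hM; have [_ dM M0 _ _] := hM; rewrite le0r => /orP[/eqP -> m|t0].
  rewrite big1 => [|j _]; last by rewrite Lam0 mulr0 mul0r.
  case: m => [|m]; first by rewrite mul0r.
  rewrite count_pmf_nat (_ : [set w | _] = set0) ?measure0 ?mulr0 //.
  by apply/seteqP; split => w //=; rewrite M0.
apply: pgf_expR_recursion => [y|y|x /andP[x0 x8]].
- exact: count_pmf_lt0.
- exact: count_pmf_le1.
have x08 : 0 <= x <= 8^-1 by rewrite !ltW.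
apply: EFin_inj; rewrite -(ngcp_pgf hM t0) ?EFin_lim_pseries //.
  apply: (is_cvg_pseries_exp4 (C := 1)) x08 => n.
  by rewrite mul1r (le_trans (count_pmf_le1 _ _ dM)) // exprn_ege1 // ler1n.
by rewrite ltW ?(le_trans (ltW x8)) //; lra.
Qed.

Lemma indep_processes_at M1 M2 t (a b : nat) : indep_processes P M1 M2 -> 0 <= t ->
  P ([set w | M1 t w = a] `&` [set w | M2 t w = b]) =
  (P [set w | M1 t w = a] * P [set w | M2 t w = b])%E.
Proof.
move=> /(_ [:: t] [:: t] [:: a] [:: b]) /=; rewrite andbT => indep t0.
by have := indep t0 t0 erefl erefl; rewrite !bigcap_mkord !big_ord1.
Qed.

Lemma pS_diff_convolution M1 M2 t z :
  discrete_process M1 -> discrete_process M2 -> indep_processes P M1 M2 -> 0 <= t ->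
  (pS P M1 M2 z t)%:E = diff_convolution (count_pmf M1 t) (count_pmf M2 t) z.
Proof.
move=> dM1 dM2 indep t0.
pose F m := [set w | (M1 t w)%:Z = z + m%:Z] `&` [set w | M2 t w = m].
have mF m : measurable (F m).
  by apply: measurableI; [exact: measurable_count_eq | exact: dM2].
have S_eq : [set w | (M1 t w)%:Z - (M2 t w)%:Z = z] = \bigcup_(m in setT) F m.
  apply/seteqP; split => w /=.
    by move=> Sw; exists (M2 t w) => //; split => //=; rewrite -Sw subrK.
  by move=> [m _ [/= -> ->]]; rewrite addrK.
have mS : measurable (\bigcup_(m in setT) F m) by exact: bigcup_measurable.
rewrite /pS S_eq fineK ?(fin_num_measure P _ mS) // measure_bigcup //=; last first.
  by move=> i j _ _ [w [[_ <-] [_ <-]]].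
transitivity (\sum_(m <oo) P (F m))%E; first by apply: eq_eseriesl => m; rewrite in_setT.
apply: eq_eseriesr => m _; rewrite count_pmf_nat /F.
case: (ltP (z + m%:Z) 0) => [zm0|/gez0_abs <-].
  by rewrite count_pmf_lt0 // mul0r count_eq_lt0 // set0I measure0.
by rewrite count_pmf_nat count_eq_nat indep_processes_at // EFinM !fineK ?fin_num_measure.
Qed.

Lemma pS_recursion k lam gam M1 M2 t (n : nat) :
  is_NGCP P k lam M1 -> is_NGCP P k gam M2 -> indep_processes P M1 M2 -> 0 <= t ->
  \sum_(1 <= j < k.+1) j%:R * Lam lam j t * pS P M1 M2 (n%:Z - j%:Z) t =
    n%:R * pS P M1 M2 n t +
    \sum_(1 <= j < k.+1) j%:R * Lam gam j t * pS P M1 M2 (n%:Z + j%:Z) t.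
Proof.
move=> M1_ngcp M2_ngcp indep t0.
have [lam_ok dM1 _ _ _] := M1_ngcp; have [gam_ok dM2 _ _ _] := M2_ngcp.
have pSE z := pS_diff_convolution z dM1 dM2 indep t0.
apply: EFin_inj; rewrite EFinD EFinM pSE -!sumEFin.
under eq_bigr do rewrite EFinM pSE; under [in RHS]eq_bigr do rewrite EFinM pSE.
apply: diff_convolution_recursion.
- exact: count_pmf_ge0.
- exact: count_pmf_ge0.
- exact: count_pmf_lt0.
- by move=> j jk; apply: Lam_ge0 lam_ok jk t0.
- by move=> j jk; apply: Lam_ge0 gam_ok jk t0.
- exact: ngcp_count_pmf_recursion M1_ngcp t0.
- exact: ngcp_count_pmf_recursion M2_ngcp t0.
Qed.

End CountingLaw.

Unset Implicit Arguments.

Theorem theorem3p4 (d : measure_display) (T : measurableType d) (R : realType)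
    (P : probability T R) (k : nat) (lam gam : nat -> R -> R)
    (M1 M2 : R -> T -> nat) :
  is_NGCP P k lam M1 -> is_NGCP P k gam M2 -> indep_processes P M1 M2 ->
  forall (t : R) (n : nat), 0 <= t -> (1 <= n)%N ->
  pS P M1 M2 n%:Z t =
    n%:R^-1 * \sum_(1 <= j < k.+1)
      j%:R * (Lam lam j t * pS P M1 M2 (n%:Z - j%:Z) t
              - Lam gam j t * pS P M1 M2 (n%:Z + j%:Z) t).
Proof.
move=> M1_ngcp M2_ngcp indep t n t0 n1.
rewrite (eq_bigr (fun j => j%:R * Lam lam j t * pS P M1 M2 (n%:Z - j%:Z) t -
    j%:R * Lam gam j t * pS P M1 M2 (n%:Z + j%:Z) t)) => [|j _]; last by rewrite mulrBr !mulrA.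
rewrite sumrB (pS_recursion n M1_ngcp M2_ngcp indep t0) addrK.
by rewrite mulKf // pnatr_eq0 -lt0n.
Qed.
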